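(* Let $A$ be a commutative unital Rickart C*-algebra and let $a,b\in A$ be self-adjoint with $ab\ge a$. Then $\mathtt{D}_a\le\mathtt{D}_b$ in $L_A$.
   Context: $L_A$ is the distributive lattice freely generated by symbols $\mathtt{D}_a$, $a\in A_{\mathrm{sa}}$, subject to $\mathtt{D}_1=1$, $\mathtt{D}_a\wedge\mathtt{D}_{-a}=0$, $\mathtt{D}_{-b^2}=0$, $\mathtt{D}_{a+b}\le\mathtt{D}_a\vee\mathtt{D}_b$, $\mathtt{D}_{ab}=(\mathtt{D}_a\wedge\mathtt{D}_b)\vee(\mathtt{D}_{-a}\wedge\mathtt{D}_{-b})$. Equivalently $L_A\cong A^+/{\approx}$, where on the positive cone $A^+$ one sets $a\preccurlyeq b$ iff $a\le nb$ for some $n\in\mathbb{N}$, $a\approx b$ iff $a\preccurlyeq b\preccurlyeq a$, and $\mathtt{D}_a$ corresponds to $[a^+]$. A C*-algebra is Rickart if every right annihilator $\{y\mid xy=0\}$ of a single element $x$ is of the form $pA$ for a projection $p$. *)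

From Stdlib Require Import Reals.
From mathcomp Require Import all_boot all_order.
Set Implicit Arguments.
Unset Strict Implicit.
Unset Printing Implicit Defensive.

Record Cplx := mkC { Cre : R; Cim : R }.
Definition C0 : Cplx := mkC R0 R0.
Definition C1 : Cplx := mkC R1 R0.
Definition Cadd (z w : Cplx) : Cplx := mkC (Rplus (Cre z) (Cre w)) (Rplus (Cim z) (Cim w)).
Definition Cmul (z w : Cplx) : Cplx :=
  mkC (Rminus (Rmult (Cre z) (Cre w)) (Rmult (Cim z) (Cim w)))
      (Rplus (Rmult (Cre z) (Cim w)) (Rmult (Cim z) (Cre w))).
Definition Cconj (z : Cplx) : Cplx := mkC (Cre z) (Ropp (Cim z)).
Definition Cmod (z : Cplx) : R := sqrt (Rplus (Rmult (Cre z) (Cre z)) (Rmult (Cim z) (Cim z))).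

Record CommUnitalCStarAlgebra := {
  cs_car :> Type;
  cs_zero : cs_car;
  cs_one : cs_car;
  cs_add : cs_car -> cs_car -> cs_car;
  cs_opp : cs_car -> cs_car;
  cs_mul : cs_car -> cs_car -> cs_car;
  cs_scal : Cplx -> cs_car -> cs_car;
  cs_star : cs_car -> cs_car;
  cs_norm : cs_car -> R;
  cs_addA : forall x y z, cs_add x (cs_add y z) = cs_add (cs_add x y) z;
  cs_addC : forall x y, cs_add x y = cs_add y x;
  cs_add0l : forall x, cs_add cs_zero x = x;
  cs_addNl : forall x, cs_add (cs_opp x) x = cs_zero;
  cs_mulA : forall x y z, cs_mul x (cs_mul y z) = cs_mul (cs_mul x y) z;
  cs_mulC : forall x y, cs_mul x y = cs_mul y x;
  cs_mul1l : forall x, cs_mul cs_one x = x;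
  cs_mulDl : forall x y z, cs_mul (cs_add x y) z = cs_add (cs_mul x z) (cs_mul y z);
  cs_scalA : forall a b x, cs_scal a (cs_scal b x) = cs_scal (Cmul a b) x;
  cs_scal1 : forall x, cs_scal C1 x = x;
  cs_scalDr : forall a x y, cs_scal a (cs_add x y) = cs_add (cs_scal a x) (cs_scal a y);
  cs_scalDl : forall a b x, cs_scal (Cadd a b) x = cs_add (cs_scal a x) (cs_scal b x);
  cs_scalMl : forall a x y, cs_scal a (cs_mul x y) = cs_mul (cs_scal a x) y;
  cs_starK : forall x, cs_star (cs_star x) = x;
  cs_starD : forall x y, cs_star (cs_add x y) = cs_add (cs_star x) (cs_star y);
  cs_starM : forall x y, cs_star (cs_mul x y) = cs_mul (cs_star y) (cs_star x);
  cs_starZ : forall a x, cs_star (cs_scal a x) = cs_scal (Cconj a) (cs_star x);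
  cs_norm_ge0 : forall x, Rle R0 (cs_norm x);
  cs_norm_eq0 : forall x, cs_norm x = R0 -> x = cs_zero;
  cs_norm_triangle : forall x y, Rle (cs_norm (cs_add x y)) (Rplus (cs_norm x) (cs_norm y));
  cs_normZ : forall a x, cs_norm (cs_scal a x) = Rmult (Cmod a) (cs_norm x);
  cs_normM : forall x y, Rle (cs_norm (cs_mul x y)) (Rmult (cs_norm x) (cs_norm y));
  cs_complete : forall u : nat -> cs_car,
    (forall eps, Rlt R0 eps -> exists N, forall m n, le N m -> le N n ->
        Rlt (cs_norm (cs_add (u m) (cs_opp (u n)))) eps) ->
    exists l, forall eps, Rlt R0 eps -> exists N, forall n, le N n ->
        Rlt (cs_norm (cs_add (u n) (cs_opp l))) eps;
  cs_cstar : forall x, cs_norm (cs_mul (cs_star x) x) = Rmult (cs_norm x) (cs_norm x)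
}.

Section CStarDefs.
Variable A : CommUnitalCStarAlgebra.

Definition cs_sub (x y : A) : A := cs_add x (cs_opp y).

Definition selfadj (x : A) : Prop := cs_star x = x.

Definition invertible (x : A) : Prop :=
  exists y : A, cs_mul x y = cs_one A.

(* positive elements: self-adjoint with spectrum contained in [0, +oo) *)
Definition is_pos (x : A) : Prop :=
  selfadj x /\
  forall l : Cplx, (Cim l <> R0 \/ Rlt (Cre l) R0) ->
    invertible (cs_sub x (cs_scal l (cs_one A))).

Definition cs_ge (x y : A) : Prop := is_pos (cs_sub x y).

Definition projection (p : A) : Prop := cs_star p = p /\ cs_mul p p = p.

Definition Rickart : Prop :=
  forall x : A, exists p : A, projection p /\
    forall y : A, cs_mul x y = cs_zero A <-> exists z : A, y = cs_mul p z.
End CStarDefs.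

(* A map D : A_sa -> L (extended arbitrarily outside A_sa) satisfying the
   defining relations of L_A. *)
Definition LA_model (A : CommUnitalCStarAlgebra) (d : Order.disp_t)
    (L : tbDistrLatticeType d) (D : A -> L) : Prop :=
  D (cs_one A) = \top%O /\
  (forall a, selfadj a -> (D a `&` D (cs_opp a))%O = \bot%O) /\
  (forall b, selfadj b -> D (cs_opp (cs_mul b b)) = \bot%O) /\
  (forall a b, selfadj a -> selfadj b -> (D (cs_add a b) <= D a `|` D b)%O) /\
  (forall a b, selfadj a -> selfadj b ->
     D (cs_mul a b) = ((D a `&` D b) `|` (D (cs_opp a) `&` D (cs_opp b)))%O).

(* D_a <= D_b in the distributive lattice L_A presented by generators and
   relations: equivalently, it holds in every bounded distributive lattice
   model of the relations. *)
Definition LA_le (A : CommUnitalCStarAlgebra) (a b : A) : Prop :=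
  forall (d : Order.disp_t) (L : tbDistrLatticeType d) (D : A -> L),
    LA_model D -> (D a <= D b)%O.

(* Write [ab - a = s^2] with [s] self-adjoint. Then [a = ab + (- s^2)], so
   [D_a <= D_ab \/ D_(-s^2) = (D_a /\ D_b) \/ (D_-a /\ D_-b)]; meeting with
   [D_a], which is disjoint from [D_-a], leaves [D_a <= D_b].
   For the square root of a positive [c], take [K > ‖c‖] and [h = 1 - c/K]:
   then [c = K (1 - h)], and [1 - y] has a self-adjoint square root [1 - l]
   whenever [y] is self-adjoint with [‖y‖ <= 1], [l] being the limit of
   [t |-> (y + t^2) / 2] iterated from [0]. The bound [‖h‖ <= 1] is where
   positivity enters: a self-adjoint [g] of norm [1] cannot have both [1 - g]
   and [1 + g] invertible. *)

From Stdlib Require Import Reals Lra Ring.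
From mathcomp Require Import all_boot all_order.

Set Implicit Arguments.
Unset Strict Implicit.

Section CStarAlgebra.
Variable A : CommUnitalCStarAlgebra.
Local Notation one := (cs_one A).
Local Notation zero := (cs_zero A).
Local Notation add := (@cs_add A).
Local Notation mul := (@cs_mul A).
Local Notation opp := (@cs_opp A).
Local Notation sub := (@cs_sub A).
Local Notation star := (@cs_star A).
Local Notation nrm := (@cs_norm A).
Local Notation rs r x := (@cs_scal A (mkC r 0) x).
Local Open Scope R_scope.

Lemma cs_ring_theory : ring_theory zero one add mul sub opp (@eq A).
Proof.
constructor => //.
- exact: cs_add0l.
- exact: cs_addC.
- exact: cs_addA.
- exact: cs_mul1l.
- exact: cs_mulC.
- exact: cs_mulA.
- exact: cs_mulDl.
- by move=> x; rewrite cs_addC cs_addNl.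
Qed.
Add Ring cs_ring : cs_ring_theory.

Lemma subr0_eq (x y : A) : sub x y = zero -> x = y.
Proof. by move=> H; transitivity (add (sub x y) y); [ring | rewrite H; ring]. Qed.

Lemma rs1 (x : A) : rs 1 x = x.
Proof. exact: cs_scal1. Qed.

Lemma rsDl r s (x : A) : add (rs r x) (rs s x) = rs (r + s) x.
Proof. by rewrite -cs_scalDl /Cadd /= Rplus_0_l. Qed.

Lemma rs0 (x : A) : rs 0 x = zero.
Proof.
have H : rs 0 x = add (rs 0 x) (rs 0 x) by rewrite rsDl Rplus_0_l.
by transitivity (add (add (rs 0 x) (rs 0 x)) (opp (rs 0 x))); [ring | rewrite -H; ring].
Qed.

Lemma rsA r s (x : A) : rs r (rs s x) = rs (r * s) x.
Proof. by rewrite cs_scalA /Cmul /=; congr cs_scal; f_equal; ring. Qed.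

Lemma rsN1 (x : A) : rs (-1) x = opp x.
Proof.
have H : add x (rs (-1) x) = zero by rewrite -{1}(rs1 x) rsDl Rplus_opp_r rs0.
by transitivity (add (opp x) (add x (rs (-1) x))); [ring | rewrite H; ring].
Qed.

Lemma rsMr r (x y : A) : rs r (mul x y) = mul x (rs r y).
Proof. by rewrite cs_mulC cs_scalMl cs_mulC. Qed.

Lemma rsN r (x : A) : rs r (opp x) = opp (rs r x).
Proof. by rewrite -!rsN1 !rsA Rmult_comm. Qed.

Lemma rsB r (x y : A) : rs r (sub x y) = sub (rs r x) (rs r y).
Proof. by rewrite /cs_sub cs_scalDr rsN. Qed.

Lemma rs_star r (x : A) : star (rs r x) = rs r (star x).
Proof. by rewrite cs_starZ /Cconj /= Ropp_0. Qed.

Lemma rs_norm r (x : A) : nrm (rs r x) = Rabs r * nrm x.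
Proof.
rewrite cs_normZ /Cmod /= Rmult_0_l Rplus_0_r.
by change (r * r) with (Rsqr r); rewrite sqrt_Rsqr_abs.
Qed.

Definition cst (r : R) : A := rs r one.

Lemma rs_cst r (x : A) : rs r x = mul (cst r) x.
Proof. by rewrite /cst -cs_scalMl cs_mul1l. Qed.

Lemma cstD r s : add (cst r) (cst s) = cst (r + s).
Proof. exact: rsDl. Qed.

Lemma cstM r s : mul (cst r) (cst s) = cst (r * s).
Proof. by rewrite -rs_cst /cst rsA. Qed.

Lemma cstN r : opp (cst r) = cst (- r).
Proof. by rewrite /cst -rsN1 rsA; congr (rs _ _); ring. Qed.

Lemma cstB r s : sub (cst r) (cst s) = cst (r - s).
Proof. by rewrite /cs_sub cstN cstD. Qed.

Lemma cst1 : cst 1 = one.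
Proof. exact: rs1. Qed.

Lemma star0 : star zero = zero.
Proof. by rewrite -{1}(rs0 zero) rs_star rs0. Qed.

Lemma starN (x : A) : star (opp x) = opp (star x).
Proof. by rewrite -!rsN1 rs_star. Qed.

Lemma starB (x y : A) : star (sub x y) = sub (star x) (star y).
Proof. by rewrite /cs_sub cs_starD starN. Qed.

Lemma star1 : star one = one.
Proof.
have E : star one = mul (star one) one by rewrite cs_mulC cs_mul1l.
rewrite -{2}(cs_starK one) -{2}(cs_starK (star one)) E cs_starM cs_starK.
by rewrite cs_mulC cs_mul1l cs_starK.
Qed.

Lemma norm0 : nrm zero = 0.
Proof. by rewrite -{1}(rs0 zero) rs_norm Rabs_R0 Rmult_0_l. Qed.

Lemma normN (x : A) : nrm (opp x) = nrm x.
Proof. by rewrite -rsN1 rs_norm Rabs_Ropp Rabs_R1 Rmult_1_l. Qed.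

Lemma normB_sym (x y : A) : nrm (sub x y) = nrm (sub y x).
Proof. by rewrite -normN; congr nrm; rewrite /cs_sub; ring. Qed.

Lemma normB_triangle (x y z : A) : nrm (sub x z) <= nrm (sub x y) + nrm (sub y z).
Proof.
have -> : sub x z = add (sub x y) (sub y z) by rewrite /cs_sub; ring.
exact: cs_norm_triangle.
Qed.

Lemma norm_le_star (x : A) : nrm x <= nrm (star x).
Proof.
have := cs_normM (star x) x; rewrite cs_cstar.
have := cs_norm_ge0 x; have := cs_norm_ge0 (star x).
by case: (Req_dec (nrm x) 0) => ?; nra.
Qed.

Lemma norm_star (x : A) : nrm (star x) = nrm x.
Proof.
apply: Rle_antisym; last exact: norm_le_star.
by rewrite -{2}(cs_starK x); apply: norm_le_star.
Qed.

Lemma norm1_le1 : nrm one <= 1.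
Proof. have := cs_cstar one; rewrite star1 cs_mul1l; have := cs_norm_ge0 one; nra. Qed.

Lemma eq_of_normB_small (x y : A) :
  (forall eps, 0 < eps -> nrm (sub x y) < eps) -> x = y.
Proof.
move=> H; apply/subr0_eq/cs_norm_eq0.
have := cs_norm_ge0 (sub x y); have := H (nrm (sub x y)).
by case: (Req_dec (nrm (sub x y)) 0) => // ? ?; lra.
Qed.

Definition converges_to (x : nat -> A) (l : A) := forall eps, 0 < eps ->
  exists N, forall n, (N <= n)%coq_nat -> nrm (sub (x n) l) < eps.

Lemma normB_telescope (x : nat -> A) (u : nat -> R) :
  (forall k, nrm (sub (x k.+1) (x k)) <= u k.+1 - u k) ->
  forall n d, nrm (sub (x (n + d)%N) (x n)) <= u (n + d)%N - u n.
Proof.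
move=> H n; elim=> [|d IH].
  by rewrite addn0 /cs_sub cs_addC cs_addNl norm0; lra.
rewrite addnS; have := normB_triangle (x (n + d).+1) (x (n + d)%N) (x n).
have := H (n + d)%N; lra.
Qed.

(* The majorant need not be assumed increasing: its increments dominate norms. *)
Lemma converges_of_majorant (x : nat -> A) (u : nat -> R) B :
  (forall k, nrm (sub (x k.+1) (x k)) <= u k.+1 - u k) -> (forall k, u k <= B) ->
  exists l, converges_to x l.
Proof.
move=> Hx HB.
have Hu : forall k, u k <= u k.+1 by move=> k; have := cs_norm_ge0 (sub (x k.+1) (x k)); have := Hx k; lra.
have [ul Hul] : {ul | Un_cv u ul}.
  by apply: growing_cv => //; exists B => _ [i ->].
have Hcauchy : forall m n, (n <= m)%coq_nat -> nrm (sub (x m) (x n)) <= ul - u n.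
  move=> m n /leP Hnm; rewrite -(subnKC Hnm).
  have := @normB_telescope x u Hx n (m - n); have := growing_ineq u ul Hu Hul (n + (m - n))%N; lra.
have [l Hl] : exists l, forall eps, 0 < eps -> exists N, forall n, (N <= n)%coq_nat ->
    nrm (cs_add (x n) (cs_opp l)) < eps.
  apply: cs_complete => eps He; have [N HN] := Hul eps He.
  exists N => m n Hm Hn; change (nrm (sub (x m) (x n)) < eps).
  have Hdist k : (N <= k)%coq_nat -> ul - u k < eps.
    by move=> Hk; have := HN k Hk; have := growing_ineq u ul Hu Hul k; rewrite /R_dist => ? /Rabs_def2 [? ?]; lra.
  have [Hnm|Hmn] := Nat.le_ge_cases n m.
  - by have := Hcauchy _ _ Hnm; have := Hdist n Hn; lra.
  - by rewrite normB_sym; have := Hcauchy _ _ Hmn; have := Hdist m Hm; lra.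
by exists l.
Qed.

Lemma converges_to_fixpoint (f : A -> A) (x : nat -> A) (l : A) (L : R) :
  0 <= L -> (forall n, x n.+1 = f (x n)) ->
  (forall n, nrm (sub (f (x n)) (f l)) <= L * nrm (sub (x n) l)) ->
  converges_to x l -> l = f l.
Proof.
move=> HL Hx Hf Hl; apply: eq_of_normB_small => eps He.
pose d := eps / (2 * (L + 1)).
have [N HN] := Hl d ltac:(apply: Rdiv_lt_0_compat; lra).
have H1 : L * nrm (sub (x N) l) <= L * d.
  by apply: Rmult_le_compat_l => //; apply: Rlt_le; apply: HN.
have H2 := HN N.+1 (le_S _ _ (le_n N)); rewrite Hx in H2.
have := normB_triangle l (f (x N)) (f l); rewrite (normB_sym l (f (x N))).
have := Hf N; have : (L + 1) * d = eps / 2 by rewrite /d; field; lra.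
lra.
Qed.

Lemma converges_to_selfadj (x : nat -> A) (l : A) :
  (forall n, selfadj (x n)) -> converges_to x l -> selfadj l.
Proof.
move=> Hx Hl; apply: eq_of_normB_small => eps He.
have [N HN] := Hl (eps / 2) ltac:(lra); have := HN N (le_n N).
have := normB_triangle (star l) (star (x N)) l.
by rewrite -starB norm_star (Hx N) (normB_sym l); lra.
Qed.

(* Neumann series: the partial sums [x k = 1 + z + ... + z^(k-1)]. *)
Lemma invertible_one_sub (z : A) : nrm z < 1 -> invertible (sub one z).
Proof.
move=> Hz; set q := nrm z in Hz *; have Hq : 0 <= q := cs_norm_ge0 z.
pose x := fix x k := if k is k.+1 then add one (mul z (x k)) else zero.
have Hx : forall k, nrm (sub (x k.+1) (x k)) <= q ^ k.
  elim=> [|k IH].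
    have -> : sub (x 1%N) (x 0%N) = one by rewrite /= /cs_sub; ring.
    exact: norm1_le1.
  have -> : sub (x k.+2) (x k.+1) = mul z (sub (x k.+1) (x k)) by rewrite /= /cs_sub; ring.
  apply: Rle_trans (cs_normM _ _) _; exact: Rmult_le_compat_l.
have [l Hl] : exists l, converges_to x l.
  apply: (@converges_of_majorant x (fun k => (1 - q ^ k) / (1 - q)) (/ (1 - q))).
    move=> k; have -> : (1 - q ^ k.+1) / (1 - q) - (1 - q ^ k) / (1 - q) = q ^ k.
      by rewrite /=; field; lra.
    exact: Hx.
  move=> k; have := pow_le q k Hq; have := Rinv_0_lt_compat (1 - q) ltac:(lra).
  rewrite /Rdiv; nra.
have El : l = add one (mul z l).
  apply: (@converges_to_fixpoint (fun t => add one (mul z t)) x l q Hq) => // n.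
  have -> : sub (add one (mul z (x n))) (add one (mul z l)) = mul z (sub (x n) l).
    by rewrite /cs_sub; ring.
  exact: cs_normM.
exists l; transitivity (sub l (mul z l)); first by rewrite /cs_sub; ring.
by rewrite {1}El /cs_sub; ring.
Qed.

Lemma selfadj_mul (x y : A) : selfadj x -> selfadj y -> selfadj (mul x y).
Proof. by rewrite /selfadj cs_starM => -> ->; rewrite cs_mulC. Qed.

Lemma selfadj_add (x y : A) : selfadj x -> selfadj y -> selfadj (add x y).
Proof. by rewrite /selfadj cs_starD => -> ->. Qed.

Lemma selfadj_opp (x : A) : selfadj x -> selfadj (opp x).
Proof. by rewrite /selfadj starN => ->. Qed.

Lemma selfadj_sub (x y : A) : selfadj x -> selfadj y -> selfadj (sub x y).
Proof. by rewrite /selfadj starB => -> ->. Qed.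

Lemma selfadj_rs r (x : A) : selfadj x -> selfadj (rs r x).
Proof. by rewrite /selfadj rs_star => ->. Qed.

Lemma selfadj_inverse (r v : A) : selfadj r -> mul r v = one -> selfadj v.
Proof.
move=> Hr Hv; have H : mul (star v) r = one by rewrite -{1}Hr -cs_starM Hv star1.
transitivity (mul (mul (star v) r) v); last by rewrite H cs_mul1l.
by rewrite -cs_mulA Hv cs_mulC cs_mul1l.
Qed.

Lemma invertible_rs r (x : A) : invertible (rs r x) -> invertible x.
Proof. by move=> [w Hw]; exists (rs r w); rewrite -rsMr cs_scalMl. Qed.

Fixpoint sqrt_majorant (k : nat) : R :=
  if k is k.+1 then (1 + sqrt_majorant k * sqrt_majorant k) / 2 else 0.

Lemma sqrt_majorant_01 k : 0 <= sqrt_majorant k <= 1.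
Proof. by elim: k => [|k IH] /=; nra. Qed.

Section SqrtOneSub.
Variable y : A.
Hypothesis y_sa : selfadj y.
Hypothesis y_le1 : nrm y <= 1.

(* Iterating [t |-> (y + t^2) / 2] from [0] converges to [l] with
   [(1 - l)^2 = 1 - y]; its scalar instance [y = 1] is [sqrt_majorant]. *)
Fixpoint sqrt_iter (k : nat) : A :=
  if k is k.+1 then rs (/ 2) (add y (mul (sqrt_iter k) (sqrt_iter k))) else zero.

Lemma sqrt_iter_selfadj k : selfadj (sqrt_iter k).
Proof.
elim: k => [|k IH] /=; first exact: star0.
by apply/selfadj_rs/selfadj_add => //; apply: selfadj_mul.
Qed.

Lemma sqrt_step_sub (u v : A) :
  sub (rs (/ 2) (add y (mul u u))) (rs (/ 2) (add y (mul v v))) =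
  rs (/ 2) (mul (add u v) (sub u v)).
Proof. by rewrite -rsB; congr cs_scal; rewrite /cs_sub; ring. Qed.

Lemma norm_sqrt_iter k : nrm (sqrt_iter k) <= sqrt_majorant k.
Proof.
elim: k => [|k IH] /=; first by rewrite norm0; lra.
rewrite rs_norm Rabs_pos_eq; last lra.
have := cs_norm_triangle y (mul (sqrt_iter k) (sqrt_iter k)).
have := cs_normM (sqrt_iter k) (sqrt_iter k); have := cs_norm_ge0 (sqrt_iter k).
have := sqrt_majorant_01 k; nra.
Qed.

Lemma sqrt_iter_step k :
  nrm (sub (sqrt_iter k.+1) (sqrt_iter k)) <= sqrt_majorant k.+1 - sqrt_majorant k.
Proof.
elim: k => [|k IH].
  have -> : sub (sqrt_iter 1) (sqrt_iter 0) = rs (/ 2) y.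
    rewrite /=; have -> : add y (mul zero zero) = y by ring.
    by rewrite /cs_sub; ring.
  by rewrite rs_norm /= Rabs_pos_eq; lra.
rewrite [sub _ _](sqrt_step_sub (sqrt_iter k.+1) (sqrt_iter k)).
have -> : sqrt_majorant k.+2 - sqrt_majorant k.+1 =
    / 2 * ((sqrt_majorant k.+1 + sqrt_majorant k) * (sqrt_majorant k.+1 - sqrt_majorant k)).
  by rewrite [sqrt_majorant k.+2]/= [sqrt_majorant k.+1]/=; field.
rewrite rs_norm Rabs_pos_eq; last lra.
apply: Rmult_le_compat_l; first lra.
apply: Rle_trans (cs_normM _ _) _; apply: Rmult_le_compat => //; try exact: cs_norm_ge0.
have := cs_norm_triangle (sqrt_iter k.+1) (sqrt_iter k).
have := norm_sqrt_iter k; have := norm_sqrt_iter k.+1; lra.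
Qed.

Lemma sqrt_one_sub : exists s, selfadj s /\ mul s s = sub one y.
Proof.
have [l Hl] : exists l, converges_to sqrt_iter l.
  apply: (@converges_of_majorant sqrt_iter sqrt_majorant 1 sqrt_iter_step).
  by move=> k; case: (sqrt_majorant_01 k).
have El : l = rs (/ 2) (add y (mul l l)).
  apply: (@converges_to_fixpoint (fun t => rs (/ 2) (add y (mul t t))) sqrt_iter l (1 + nrm l))
    => [|//|n|//]; first by have := cs_norm_ge0 l; lra.
  rewrite sqrt_step_sub rs_norm Rabs_pos_eq; last lra.
  have := cs_normM (add (sqrt_iter n) l) (sub (sqrt_iter n) l).
  have : nrm (add (sqrt_iter n) l) * nrm (sub (sqrt_iter n) l)
      <= (1 + nrm l) * nrm (sub (sqrt_iter n) l).
    apply: Rmult_le_compat_r; first exact: cs_norm_ge0.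
    have := cs_norm_triangle (sqrt_iter n) l; have := norm_sqrt_iter n.
    have := sqrt_majorant_01 n; lra.
  have := cs_norm_ge0 (mul (add (sqrt_iter n) l) (sub (sqrt_iter n) l)); lra.
have E2 : add l l = add y (mul l l).
  rewrite {1 2}El rsDl (_ : / 2 + / 2 = 1); [exact: rs1 | field].
exists (sub one l); split.
  by apply: selfadj_sub; [exact: star1 | exact: (converges_to_selfadj sqrt_iter_selfadj Hl)].
transitivity (sub (add one (mul l l)) (add l l)); first by rewrite /cs_sub; ring.
by rewrite E2 /cs_sub; ring.
Qed.

End SqrtOneSub.

Lemma scalMr a (x y : A) : mul x (cs_scal a y) = cs_scal a (mul x y).
Proof. by rewrite cs_mulC -cs_scalMl cs_mulC. Qed.

(* With [x := g + i p], the C*-identity gives [‖x‖^2 = ‖g^2 + p^2‖], while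
   [2 g = x + x^*] gives [‖g‖ <= ‖x‖]. *)
Lemma norm_sqr_le_norm_add_sqr (g p : A) : selfadj g -> selfadj p ->
  nrm g * nrm g <= nrm (add (mul g g) (mul p p)).
Proof.
move=> Hg Hp; pose i := mkC 0 1; pose mi := mkC 0 (-1).
have Ei q : add (cs_scal i q) (cs_scal mi q) = zero.
  rewrite -cs_scalDl (_ : Cadd i mi = mkC 0 0) ?rs0 //.
  by rewrite /Cadd /=; f_equal; ring.
have Eii : mul (cs_scal mi p) (cs_scal i p) = mul p p.
  rewrite -cs_scalMl scalMr cs_scalA (_ : Cmul mi i = mkC 1 0) ?cs_scal1 //.
  by rewrite /Cmul /=; f_equal; ring.
pose x := add g (cs_scal i p).
have Ex : star x = add g (cs_scal mi p) by rewrite /x cs_starD cs_starZ Hg Hp.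
have Exx : mul (star x) x = add (mul g g) (mul p p).
  rewrite Ex; transitivity (add (mul g g) (add (add (mul g (cs_scal i p))
      (mul (cs_scal mi p) g)) (mul (cs_scal mi p) (cs_scal i p)))); first by rewrite /x; ring.
  by rewrite Eii scalMr -cs_scalMl (cs_mulC p g) Ei; ring.
have Ex2 : add x (star x) = rs 2 g.
  rewrite Ex; transitivity (add (add g g) (add (cs_scal i p) (cs_scal mi p))); first by rewrite /x; ring.
  rewrite Ei -{1 2}(rs1 g) rsDl (_ : 1 + 1 = 2); [ring | ring].
have := cs_norm_triangle x (star x); rewrite Ex2 rs_norm norm_star Rabs_pos_eq; last lra.
rewrite -Exx cs_cstar; have := cs_norm_ge0 g; nra.
Qed.

Lemma invertible_sqrt_one_sub_sqr (g : A) : selfadj g -> nrm g <= 1 ->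
  invertible (sub one g) -> invertible (add one g) ->
  exists r v, [/\ selfadj r, mul r v = one & mul r r = sub one (mul g g)].
Proof.
move=> Hg Hg1 [w1 Hw1] [w2 Hw2].
have [s1 [Hs1 Es1]] := sqrt_one_sub Hg Hg1.
have Hng1 : nrm (opp g) <= 1 by rewrite normN.
have [s2 [Hs2 Es2]] := sqrt_one_sub (selfadj_opp Hg) Hng1.
have Es2' : mul s2 s2 = add one g by rewrite Es2 /cs_sub; ring.
exists (mul s1 s2), (mul (mul s1 w1) (mul s2 w2)); split.
- exact: selfadj_mul.
- transitivity (mul (mul (mul s1 s1) w1) (mul (mul s2 s2) w2)); first ring.
  by rewrite Es1 Es2' Hw1 Hw2; ring.
- transitivity (mul (mul s1 s1) (mul s2 s2)); first ring.
  by rewrite Es1 Es2' /cs_sub; ring.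
Qed.

(* If [1 -+ g] are invertible then [1 - g^2 = r^2] with [r] invertible, so
   rescaling [r^-2] yields a self-adjoint [p] with [g^2 + p^2 = 1 - d],
   [d > 0], and [norm_sqr_le_norm_add_sqr] bounds [‖g‖^2] by [1 - d]. *)
Lemma norm_lt1_of_invertible_one_pm (g : A) : selfadj g -> nrm g <= 1 ->
  invertible (sub one g) -> invertible (add one g) -> nrm g < 1.
Proof.
move=> Hg Hg1 Hm Hp.
have [r [v [Hr Hrv Err]]] := invertible_sqrt_one_sub_sqr Hg Hg1 Hm Hp.
have Hv := selfadj_inverse Hr Hrv.
set V := Rmax (nrm v) 1; have HV1 : 1 <= V := Rmax_r _ _; have HVv : nrm v <= V := Rmax_l _ _.
pose d := / (V * V); have Hd0 : 0 < d by apply: Rinv_0_lt_compat; nra.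
have Hd1 : d <= 1 by rewrite /d -Rinv_1; apply: Rinv_le_contravar; nra.
have Hy1 : nrm (rs d (mul v v)) <= 1.
  rewrite rs_norm Rabs_pos_eq; last lra.
  have := cs_normM v v; have := cs_norm_ge0 v; have := cs_norm_ge0 (mul v v).
  have : nrm v * nrm v <= V * V by have := cs_norm_ge0 v; nra.
  have : d * (V * V) = 1 by rewrite /d; field; nra.
  nra.
have [q [Hq Eq]] := sqrt_one_sub (selfadj_rs d (selfadj_mul Hv Hv)) Hy1.
have Egp : add (mul g g) (mul (mul r q) (mul r q)) = cst (1 - d).
  transitivity (add (mul g g) (mul (mul r r) (mul q q))); first ring.
  rewrite Eq rs_cst; transitivity (sub (add (mul g g) (mul r r)) (mul (cst d) (mul (mul r v) (mul r v)))).
    by rewrite /cs_sub; ring.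
  by rewrite Hrv Err -cstB cst1 /cs_sub; ring.
have := norm_sqr_le_norm_add_sqr Hg (selfadj_mul Hr Hq).
rewrite Egp /cst rs_norm Rabs_pos_eq; last lra.
have := norm1_le1; have := cs_norm_ge0 one; have := cs_norm_ge0 g; nra.
Qed.

(* [m K (1 - g) = c - K (1 - m)], and [K (1 - m) < 0] is in the resolvent set. *)
Lemma invertible_one_sub_scaled_pos (c : A) (K m : R) : is_pos c -> 0 < K -> 1 < m ->
  invertible (sub one (rs (/ m) (sub one (rs (/ K) c)))).
Proof.
move=> [_ Hspec] HK Hm; apply: (@invertible_rs (m * K)).
have -> : rs (m * K) (sub one (rs (/ m) (sub one (rs (/ K) c)))) =
    sub c (cs_scal (mkC (K * (1 - m)) 0) one).
  rewrite -/(cst (K * (1 - m))).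
  transitivity (add (sub (cst (m * K)) (mul (cst (m * K)) (cst (/ m))))
                   (mul (mul (mul (cst (m * K)) (cst (/ m))) (cst (/ K))) c)).
    by rewrite !rs_cst /cs_sub; ring.
  rewrite !cstM (_ : m * K * / m = K); last by field; lra.
  rewrite (_ : K * / K = 1); last by field; lra.
  rewrite cst1 cstB; transitivity (add c (cst (m * K - K))); first ring.
  by rewrite /cs_sub cstN; congr (add c (cst _)); ring.
by apply: Hspec; right => /=; nra.
Qed.

(* [m (1 + g) = (m + 1) (1 - e / (m + 1))] and [‖e / (m + 1)‖ < 1]. *)
Lemma invertible_one_add_scaled (e : A) (m : R) : nrm e < 1 -> 0 < m ->
  invertible (add one (rs (/ m) (sub one e))).
Proof.
move=> He Hm; pose z := rs (/ (m + 1)) e.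
have Hz : nrm z < 1.
  rewrite /z rs_norm Rabs_pos_eq; last by apply/Rlt_le/Rinv_0_lt_compat; lra.
  have : / (m + 1) < 1 by rewrite -Rinv_1; apply: Rinv_lt_contravar; lra.
  have := cs_norm_ge0 e; have : 0 < / (m + 1) by apply: Rinv_0_lt_compat; lra.
  nra.
apply: (@invertible_rs m); apply: (@invertible_rs (/ (m + 1))).
have -> : rs m (add one (rs (/ m) (sub one e))) = rs (m + 1) (sub one z).
  transitivity (sub (add (cst m) (mul (cst m) (cst (/ m)))) (mul (mul (cst m) (cst (/ m))) e)).
    by rewrite !rs_cst /cs_sub; ring.
  transitivity (sub (cst (m + 1)) (mul (mul (cst (m + 1)) (cst (/ (m + 1)))) e)); last first.
    by rewrite /z !rs_cst /cs_sub; ring.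
  rewrite !cstM (_ : m * / m = 1); last by field; lra.
  by rewrite (_ : (m + 1) * / (m + 1) = 1) ?cstD //; field; lra.
rewrite rsA (_ : / (m + 1) * (m + 1) = 1) ?rs1; last by field; lra.
exact: invertible_one_sub.
Qed.

Lemma norm_one_sub_scaled_pos (c : A) (K : R) : is_pos c -> nrm c < K ->
  nrm (sub one (rs (/ K) c)) <= 1.
Proof.
move=> Hc HcK; have HK : 0 < K by have := cs_norm_ge0 c; lra.
have He : nrm (rs (/ K) c) < 1.
  rewrite rs_norm Rabs_pos_eq; last by apply/Rlt_le/Rinv_0_lt_compat.
  apply: (Rmult_lt_reg_l K) => //; rewrite -Rmult_assoc Rinv_r; lra.
set h := sub one (rs (/ K) c).
have Hh : selfadj h by apply: selfadj_sub; [exact: star1 | exact/selfadj_rs/(proj1 Hc)].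
case: (Rle_lt_dec (nrm h) 1) => // Hm; exfalso.
have Hg : selfadj (rs (/ nrm h) h) by exact: selfadj_rs.
have Hg1 : nrm (rs (/ nrm h) h) = 1.
  rewrite rs_norm Rabs_pos_eq; first by field; lra.
  by apply/Rlt_le/Rinv_0_lt_compat; lra.
have Hm0 : 0 < nrm h by lra.
have := norm_lt1_of_invertible_one_pm Hg (Req_le _ _ Hg1)
  (invertible_one_sub_scaled_pos Hc HK Hm) (invertible_one_add_scaled He Hm0).
lra.
Qed.

Lemma pos_sqrt (c : A) : is_pos c -> exists s, selfadj s /\ mul s s = c.
Proof.
move=> Hc; pose K := nrm c + 1; have HK : 0 < K by have := cs_norm_ge0 c; rewrite /K; lra.
have Hh1 := norm_one_sub_scaled_pos Hc (ltac:(rewrite /K; lra) : nrm c < K).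
have Hh : selfadj (sub one (rs (/ K) c)).
  by apply: selfadj_sub; [exact: star1 | exact/selfadj_rs/(proj1 Hc)].
have [s [Hs Es]] := sqrt_one_sub Hh Hh1.
exists (rs (sqrt K) s); split; first exact: selfadj_rs.
rewrite -cs_scalMl -rsMr rsA sqrt_sqrt; last lra.
rewrite Es (_ : sub one (sub one (rs (/ K) c)) = rs (/ K) c); last by rewrite /cs_sub; ring.
by rewrite rsA (_ : K * / K = 1) ?cs_scal1 //; field; lra.
Qed.

Lemma add_opp_sub (x y : A) : add x (opp (sub x y)) = y.
Proof. by rewrite /cs_sub; ring. Qed.

End CStarAlgebra.

Import Order.TTheory.

Lemma le_of_le_join_meets d (L : bDistrLatticeType d) (x x' y y' : L) :
  (x `&` x' = \bot)%O -> (x <= (x `&` y) `|` (x' `&` y'))%O -> (x <= y)%O.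
Proof.
move=> Hxx' Hx; have : (x <= x `&` ((x `&` y) `|` (x' `&` y')))%O by rewrite lexI lexx.
rewrite meetUr (meetA x x') Hxx' meet0x joinx0 meetA meetxx.
by move=> /le_trans; apply; exact: leIr.
Qed.

Theorem lemma5 (A : CommUnitalCStarAlgebra) (hR : Rickart A) (a b : A)
  (ha : selfadj a) (hb : selfadj b) (hab : cs_ge (cs_mul a b) a) :
  LA_le a b.
Proof.
move=> d L D [_ [D_disj [D_sqr [D_add D_mul]]]].
have [s [Hs Es]] := pos_sqrt hab.
have Hab : selfadj (cs_mul a b) by exact: selfadj_mul.
have Hc : selfadj (cs_opp (cs_sub (cs_mul a b) a)) by exact/selfadj_opp/selfadj_sub.
have Dc : D (cs_opp (cs_sub (cs_mul a b) a)) = \bot%O by rewrite -Es; exact: D_sqr.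
have := D_add _ _ Hab Hc; rewrite add_opp_sub Dc joinx0 (D_mul _ _ ha hb).
exact: le_of_le_join_meets (D_disj a ha).
Qed.
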